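(* For every hypothesis class $\mathcal{F}\subseteq\mathcal{Y}^{\mathcal{X}}$ (with $\mathcal{Y}$ finite), $\mathrm{DFFdim}(\mathrm{OtD}(\mathcal{F}))=\mathrm{Ldim}(\mathcal{F})$.
   Context: Setting. A teacher over $\mathcal{X},\mathcal{Y},\Phi$ ($\Phi$ a set of Boolean features on $\mathcal{X}$, $\bot$ a null symbol) is a pair $T=(\ell,\psi)$ with $\ell:\mathcal{X}\to\mathcal{Y}$ and $\psi:\mathcal{X}\times\mathcal{X}\to\Phi\cup\{\bot\}$ such that whenever $\ell(x)\neq\ell(\hat x)$, $\phi:=\psi(x,\hat x)\in\Phi$, $\phi(x)=1$ and $\phi(\hat x)=0$. A teacher class is a set of teachers. A history is a non-empty set $H\subseteq\mathcal{X}\times\mathcal{Y}$, $H_{\mathcal{X}}=\{x:\exists y,(x,y)\in H\}$; a teacher $(\ell,\psi)$ is consistent with $H$ if $\ell(x)=y$ for all $(x,y)\in H$; $\mathcal{T}_H$ is the set of teachers in $\mathcal{T}$ consistent with $H$. DFF dimension. A DFF tree is a rooted tree whose nodes are triples $\langle y,\phi,x\rangle$ with $y\in\mathcal{Y}\cup\{\bot\}$, $\phi\in\Phi\cup\{\bot\}$, $x\in\mathcal{X}\cup\{\bot\}$, such that the root has $y=\phi=\bot$, a node has $x=\bot$ iff it is a leaf, every edge is labeled by a pair $(\hat x,\hat y)\in\mathcal{X}\times\mathcal{Y}$, and every non-root node $\langle y,\phi,x\rangle$ with incoming edge $(\hat x,\hat y)$ has $\phi\neq\bot$ whenever $y\neq\hat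 y$. For a parent–child pair $\langle\cdot,\cdot,x\rangle\xrightarrow{(\hat x,\hat y)}\langle y,\phi,\cdot\rangle$ on a path, $(x,y)$ is called a labeled example in that path. A path from the root is consistent with a teacher $(\ell,\psi)$ if for every such parent–child pair on it, $\ell(x)=y$ and, if $y\neq\hat y$, $\psi(x,\hat x)=\phi$. Given $\mathcal{T}$ consistent with $H$, a DFF tree is shattered by $\mathcal{T}$ and $H$ if: (1) every non-root node $\langle y,\phi,x\rangle$ with incoming edge $(\hat x,\hat y)$ has $y\neq\hat y$; (2) the labels of the outgoing edges of each non-leaf node $v$ are exactly the pairs that belong to $H$ or are labeled examples in the path from the root to $v$; (3) every root-to-leaf path is consistent with some teacher in $\mathcal{T}_H$; (4) all root-to-leaf paths have the same number of edges, called the height. $\mathrm{DFFdim}(\mathcal{T},H)$ is the maximal height of a DFF tree shattered by $\mathcal{T}$ and $H$. $\mathrm{Ldim}$ is the (multiclass) Littlestone dimension: the maximal depth of a complete binary tree whose internal nodes are labeled by examples and whose two outgoing edges at each internal node are labeled by two distinct labels, such that for every root-to-leaf path some $f\in\mathcal{F}$ agrees with all (example, edge label) pairs on the path. Mapping OtD: given $\mathcal{F}\subseteq\mathcal{Y}^{\mathcal{X}}$, for each $y\in\mathcal{Y}$ let $\star_y\notin\mathcal{X}$ be a new distinct point, $H=\{(\star_y,y):y\in\mathcal{Y}\}$, $\mathcal{X}'=\mathcal{X}\cup H_{\mathcal{X}}$, and $\Phi=\{\mathbb{I}[x]:x\in\mathcal{X}'\}$ where $\mathbb{I}[x](x')=1$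 iff $x'=x$. For $f\in\mathcal{F}$ let $f':\mathcal{X}'\to\mathcal{Y}$ extend $f$ by $f'(\star_y)=y$, let $\psi_f(x,x')=\mathbb{I}[x]$, and $T_f=(f',\psi_f)$. Then $\mathrm{OtD}(\mathcal{F})=(\mathcal{T}_{\mathcal{F}},H)$ with $\mathcal{T}_{\mathcal{F}}=\{T_f:f\in\mathcal{F}\}$ (a teacher class over $\mathcal{X}',\mathcal{Y},\Phi$). *)

From mathcomp Require Import all_boot.
From Stdlib Require Import ClassicalEpsilon.
From Stdlib Require List.

Set Implicit Arguments.
Unset Strict Implicit.
Unset Printing Implicit Defensive.

(* Extended heights: XBot = maximum of the empty set, XInf = unbounded. *)
Inductive xnat := XBot | XFin of nat | XInf.

Definition sup_height (P : nat -> Prop) : xnat :=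
  match excluded_middle_informative (exists n, P n) with
  | right _ => XBot
  | left _ =>
    match excluded_middle_informative (exists b, forall n, P n -> n <= b) with
    | right _ => XInf
    | left _ => XFin (epsilon (inhabits 0%N)
                        (fun m => P m /\ forall n, P n -> n <= m))
    end
  end.

(* Teachers over X, Y, Phi.  Features are functions X -> bool; the    *)
(* feature set Phi is a predicate on them; None plays the role of bot. *)
Section Teachers.
Variables (X Y : Type).

Record teacher := Teacher {
  t_lab : X -> Y;
  t_psi : X -> X -> option (X -> bool) }.

Definition is_teacher (Phi : (X -> bool) -> Prop) (T : teacher) : Prop :=
  forall x xh, t_lab T x <> t_lab T xh ->
    exists phi, t_psi T x xh = Some phi /\ Phi phi /\ phi x = true /\ phi xh = false.

Record dff_setting := DFFSetting {
  s_Phi : (X -> bool) -> Prop;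
  s_class : teacher -> Prop;
  s_hist : X * Y -> Prop }.

Definition consistent (T : teacher) (H : X * Y -> Prop) : Prop :=
  forall x y, H (x, y) -> t_lab T x = y.

Definition class_H (C : teacher -> Prop) (H : X * Y -> Prop) : teacher -> Prop :=
  fun T => C T /\ consistent T H.

(* DFF trees: nodes <y, phi, x>, edges labelled by (xh, yh). *)
Inductive dtree :=
  DNode : option Y -> option (X -> bool) -> option X ->
          list ((X * Y) * dtree) -> dtree.

(* One parent-child pair on a path:
   parent <_,_,px> --(ex,ey)--> child <cy, cphi, _>. *)
Record step := Step {
  st_px : X; st_ex : X; st_ey : Y;
  st_cy : option Y; st_cphi : option (X -> bool) }.

Definition path_consistent (T : teacher) (p : seq step) : Prop :=
  forall s, List.In s p ->
    Some (t_lab T (st_px s)) = st_cy s /\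
    (st_cy s <> Some (st_ey s) -> t_psi T (st_px s) (st_ex s) = st_cphi s).

Definition in_examples (l : X * Y) (p : seq step) : Prop :=
  exists s, List.In s p /\ st_px s = l.1 /\ st_cy s = Some l.2.

(* dff_shat Phi H TH p n t : the subtree t, reached through the path p
   from the root, satisfies the DFF-tree axioms and the shattering
   conditions (1)-(3), and all its root-to-leaf paths have n edges (4). *)
Inductive dff_shat (Phi : (X -> bool) -> Prop) (H : X * Y -> Prop)
    (TH : teacher -> Prop) : seq step -> nat -> dtree -> Prop :=
| ds_leaf p y phi :
    (exists T, TH T /\ path_consistent T p) ->
    dff_shat Phi H TH p 0 (DNode y phi None [::])
| ds_node p n y phi x ch :
    ch <> [::] ->
    (forall l, (exists t, List.In (l, t) ch) <-> (H l \/ in_examples l p)) ->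
    (forall l t, List.In (l, t) ch ->
       exists y' phi' ox' ch',
         t = DNode y' phi' ox' ch' /\
         (forall f, phi' = Some f -> Phi f) /\
         (y' <> Some l.2 -> phi' <> None) /\
         y' <> Some l.2 /\
         dff_shat Phi H TH (rcons p (Step x l.1 l.2 y' phi')) n t) ->
    dff_shat Phi H TH p n.+1 (DNode y phi (Some x) ch).

Definition is_root (t : dtree) : Prop :=
  match t with DNode y phi _ _ => y = None /\ phi = None end.

Definition DFFdim (S : dff_setting) : xnat :=
  sup_height (fun n => exists t, is_root t /\
    dff_shat (s_Phi S) (s_hist S) (class_H (s_class S) (s_hist S)) [::] n t).

Inductive ltree :=
| LLeaf : ltree
| LNode : X -> Y -> Y -> ltree -> ltree -> ltree.

Inductive l_shat (F : (X -> Y) -> Prop) : seq (X * Y) -> nat -> ltree -> Prop :=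
| ls_leaf p :
    (exists f, F f /\ forall e, List.In e p -> f e.1 = e.2) ->
    l_shat F p 0 LLeaf
| ls_node p d x y0 y1 t0 t1 :
    y0 <> y1 ->
    l_shat F (rcons p (x, y0)) d t0 ->
    l_shat F (rcons p (x, y1)) d t1 ->
    l_shat F p d.+1 (LNode x y0 y1 t0 t1).

Definition Ldim (F : (X -> Y) -> Prop) : xnat :=
  sup_height (fun d => exists t, l_shat F [::] d t).

End Teachers.

(* The mapping OtD.  X' = X + Y, with star_y := inr y. *)
Section OtD.
Variables (X Y : Type).

Definition indic (x : X + Y) : X + Y -> bool :=
  fun x' => if excluded_middle_informative (x' = x) then true else false.

Definition otd_Phi : (X + Y -> bool) -> Prop := fun phi => exists x, phi = indic x.

Definition otd_hist : (X + Y) * Y -> Prop :=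
  fun p => match p.1 with inr y => p.2 = y | inl _ => False end.

Definition ext_lab (f : X -> Y) : X + Y -> Y :=
  fun z => match z with inl x => f x | inr y => y end.

Definition T_of (f : X -> Y) : teacher (X + Y) Y :=
  Teacher (ext_lab f) (fun x _ => Some (indic x)).

Definition otd_class (F : (X -> Y) -> Prop) : teacher (X + Y) Y -> Prop :=
  fun T => exists f, F f /\ T = T_of f.

Definition OtD (F : (X -> Y) -> Prop) : dff_setting (X + Y) Y :=
  DFFSetting otd_Phi (otd_class F) otd_hist.

End OtD.

From mathcomp Require Import all_boot.
From Stdlib Require Import FunctionalExtensionality PropExtensionality.

Set Implicit Arguments.
Unset Strict Implicit.
Unset Printing Implicit Defensive.

(* In OtD every node of a shattered DFF tree has, for each label w, an
   outgoing edge (star_w, w) whose child must carry a label different from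
   w.  So the query of a node is never a star point (its label would be w),
   and the edges (star_w0, w0) and (star_z0, z0), with z0 the label chosen
   for w0, lead to two children with distinct labels of the same point of X:
   a Littlestone split.  Conversely, a Littlestone node x with labels y0 <> y1
   becomes the DFF node querying x whose child along an edge (xh, yh) is
   labelled y1 if yh = y0 and y0 otherwise, with feature indic x; indicator
   features make every such pair consistent with the teachers T_f. *)

Lemma sup_height_ext (P Q : nat -> Prop) :
  (forall n, P n <-> Q n) -> sup_height P = sup_height Q.
Proof.
move=> PQ; suff -> : P = Q by [].
by apply: functional_extensionality => n; apply: propositional_extensionality.
Qed.

Lemma In_rcons (A : Type) (x s : A) p :
  List.In x (rcons p s) <-> List.In x p \/ x = s.
Proof. by rewrite -cats1 List.in_app_iff /=; intuition. Qed.

Lemma In_mem (T : eqType) (x : T) s : List.In x s <-> x \in s.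
Proof.
elim: s => [|h s IH] //=; rewrite in_cons IH; split.
- by case=> [->|->]; rewrite ?eqxx ?orbT.
- by case/orP=> [/eqP->|]; [left|right].
Qed.

Section Paths.
Variables (X Y : Type).

Lemma path_consistent_rcons (T : teacher X Y) p s :
  path_consistent T (rcons p s) -> path_consistent T p.
Proof. by move=> pc s' ps'; apply: pc; apply/In_rcons; left. Qed.

Lemma dff_shat_consistent (Phi : (X -> bool) -> Prop) (H : X * Y -> Prop)
    (TH : teacher X Y -> Prop) p n t :
  dff_shat Phi H TH p n t -> exists T, TH T /\ path_consistent T p.
Proof.
elim: n p t => [|n IH] p t sh; inversion sh as [? ? ? leaf|? ? ? ? ? ch ch0 _ chP];
  subst => //; clear sh.
case: ch ch0 chP => [//|[l t'] ch] _ chP.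
have [? [? [? [? [_ [_ [_ [_ sh']]]]]]]] := chP l t' (or_introl erefl).
have [T [TH_T pc]] := IH _ _ sh'.
by exists T; split => //; apply: path_consistent_rcons pc.
Qed.

Fixpoint path_examples (p : seq (step X Y)) : seq (X * Y) :=
  match p with
  | [::] => [::]
  | s :: r => if st_cy s is Some z then (st_px s, z) :: path_examples r
              else path_examples r
  end.

Lemma path_examplesP l p : List.In l (path_examples p) <-> in_examples l p.
Proof.
elim: p => [|h p IH] /=; first by split=> [[]|[s [[] _]]].
case cy: (st_cy h) => [z|]; split.
- case=> [<-|/IH [s [ps ls]]]; last by exists s; split; [right|].
  by exists h; split; [left|].
- case=> s [[<-|ps] [px ls]]; last by right; apply/IH; exists s.
  by left; move: ls; rewrite cy px => -[->]; case: l {px IH}.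
- by move/IH=> [s [ps ls]]; exists s; split; [right|].
- case=> s [[<-|ps] ls]; first by rewrite cy in ls; case: ls.
  by apply/IH; exists s.
Qed.

End Paths.

Section OtDToLittlestone.
Variables (X Y : Type) (F : (X -> Y) -> Prop).

Notation Z := (X + Y)%type.
Notation DS := (dff_shat (@otd_Phi X Y) (@otd_hist X Y)
                  (class_H (otd_class F) (@otd_hist X Y))).

Fixpoint ltree_examples (p : seq (step Z Y)) : seq (X * Y) :=
  match p with
  | [::] => [::]
  | s :: r => match st_px s, st_cy s with
              | inl a, Some z => (a, z) :: ltree_examples r
              | _, _ => ltree_examples r
              end
  end.

Lemma ltree_examples_rcons p s a z : st_px s = inl a -> st_cy s = Some z ->
  ltree_examples (rcons p s) = rcons (ltree_examples p) (a, z).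
Proof.
move=> px cy; elim: p => [|h p IH] /=; first by rewrite px cy.
by rewrite IH; case: (st_px h) => ?; case: (st_cy h).
Qed.

Lemma in_ltree_examples e p : List.In e (ltree_examples p) ->
  exists s, List.In s p /\ st_px s = inl e.1 /\ st_cy s = Some e.2.
Proof.
elim: p => [|h p IH] //=.
case px: (st_px h) => [a|w]; case cy: (st_cy h) => [z|] /=;
  try by move=> /IH [s [ps es]]; exists s; split; [right|].
case=> [<-|/IH [s [ps es]]]; last by exists s; split; [right|].
by exists h; split; [left|].
Qed.

Lemma otd_star_child p n y phi x ch (w : Y) :
  DS p n.+1 (DNode y phi (Some x) ch) ->
  exists f phi' t', ext_lab f x <> w /\
    DS (rcons p (Step x (inr w) w (Some (ext_lab f x)) phi')) n t'.
Proof.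
move=> sh; inversion sh as [|? ? ? ? ? ? _ chH chP]; subst; clear sh.
have [t' ch_w] : exists t', List.In ((inr w, w), t') ch by apply/chH; left.
have [y' [phi' [_ [_ [_ [_ [_ [y'w sh']]]]]]]] := chP _ _ ch_w.
have [T [[[f [_ ->]] _] pc]] := dff_shat_consistent sh'.
have [/= lab _] := pc _ (proj2 (In_rcons _ _ _) (or_intror erefl)).
by exists f, phi', t'; rewrite lab; split => // E; apply: y'w; rewrite -lab E.
Qed.

Lemma ltree_of_dff_tree n p t : DS p n t ->
  exists lt, l_shat F (ltree_examples p) n lt.
Proof.
elim: n p t => [|n IH] p t sh.
  inversion sh as [? ? ? [T [[[f [Ff ->]] _] pc]]|]; subst.
  exists (LLeaf X Y); constructor; exists f; split => // e.
  move=> /in_ltree_examples [s [ps [px cy]]].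
  by have [] := pc s ps; rewrite px cy => -[].
inversion sh as [|? ? y phi x ch ch0 chH chP]; subst; clear chH chP.
case: ch ch0 sh => [//|[[? w0] ?] ?] _ sh.
have [f0 [? [? [_ sh0]]]] := otd_star_child w0 sh.
have [f1 [? [? [f01 sh1]]]] := otd_star_child (ext_lab f0 x) sh.
case: x sh sh0 sh1 f01 => [a|w] sh sh0 sh1 f01; last first.
  by have [f [? [? [/(_ erefl)]]]] := otd_star_child w sh.
have [lt0 lt0_sh] := IH _ _ sh0; have [lt1 lt1_sh] := IH _ _ sh1.
exists (LNode a (f0 a) (f1 a) lt0 lt1); constructor.
- by move=> E; apply: f01; rewrite /= E.
- by rewrite (@ltree_examples_rcons _ _ a (f0 a)) in lt0_sh.
- by rewrite (@ltree_examples_rcons _ _ a (f1 a)) in lt1_sh.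
Qed.

End OtDToLittlestone.

Section LittlestoneToOtD.
Variables (X : Type) (Y : finType) (F : (X -> Y) -> Prop).

Notation Z := (X + Y)%type.
Notation DS := (dff_shat (@otd_Phi X Y) (@otd_hist X Y)
                  (class_H (otd_class F) (@otd_hist X Y))).

Definition otd_edge_labels (p : seq (step Z Y)) : seq (Z * Y) :=
  [seq (inr y, y) | y <- enum Y] ++ path_examples p.

Lemma otd_edge_labelsP l p :
  List.In l (otd_edge_labels p) <-> otd_hist l \/ in_examples l p.
Proof.
rewrite List.in_app_iff List.in_map_iff path_examplesP; split.
- by case=> [[y [<- _]]|]; [left | right].
- case=> [|]; last by right.
  case: l => [[x|w] y] //; rewrite /otd_hist /= => ->; left; exists w; split => //.
  by apply/In_mem; rewrite mem_enum.
Qed.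

Definition otd_step (a : X) (l : Z * Y) (z : Y) : step Z Y :=
  Step (inl a) l.1 l.2 (Some z) (Some (indic (inl a))).

Fixpoint dff_of_ltree (t : ltree X Y) (p : seq (step Z Y)) y phi : dtree Z Y :=
  match t with
  | LLeaf => DNode y phi None [::]
  | LNode a y0 y1 t0 t1 =>
    DNode y phi (Some (inl a)) [seq (l,
      let z := if l.2 == y0 then y1 else y0 in
      dff_of_ltree (if l.2 == y0 then t1 else t0) (rcons p (otd_step a l z))
        (Some z) (Some (indic (inl a)))) | l <- otd_edge_labels p]
  end.

Lemma dff_of_ltree_root t p y phi :
  exists ox ch, dff_of_ltree t p y phi = DNode y phi ox ch.
Proof. by case: t => [|? ? ? ? ?]; do 2 eexists. Qed.

Definition otd_path_over (p : seq (step Z Y)) (q : seq (X * Y)) : Prop :=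
  forall s, List.In s p -> exists a l z, s = otd_step a l z /\ List.In (a, z) q.

Lemma otd_path_over_rcons p q a l z : otd_path_over p q ->
  otd_path_over (rcons p (otd_step a l z)) (rcons q (a, z)).
Proof.
move=> pq s /In_rcons [ps|->]; last by exists a, l, z; split => //; apply/In_rcons; right.
have [a' [l' [z' [-> qz']]]] := pq s ps.
by exists a', l', z'; split => //; apply/In_rcons; left.
Qed.

Lemma dff_of_ltree_shattered q d t : l_shat F q d t ->
  forall p, otd_path_over p q -> forall y phi, DS p d (dff_of_ltree t p y phi).
Proof.
elim=> {q d t} [q [f [Ff fq]]|q d a y0 y1 t0 t1 y01 _ IH0 _ IH1] p pq y phi /=.
  constructor; exists (T_of f); split; first by split; [exists f | case=> [] // w ? ->].
  by move=> s /pq [a [l [z [-> qz]]]]; rewrite /= (fq _ qz).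
constructor.
- have : List.In (inr y0, y0) (otd_edge_labels p) by apply/otd_edge_labelsP; left.
  by case: (otd_edge_labels p).
- move=> l; rewrite -otd_edge_labelsP; split.
  + by case=> t /List.in_map_iff [l' [[<- _] ?]].
  + by move=> pl; eexists; apply/List.in_map_iff; exists l.
move=> l t /List.in_map_iff [_ [[-> <-] _]].
set z := if l.2 == y0 then y1 else y0.
have [ox [ch root]] := dff_of_ltree_root (if l.2 == y0 then t1 else t0)
  (rcons p (otd_step a l z)) (Some z) (Some (indic (inl a))).
exists (Some z), (Some (indic (inl a))), ox, ch; split; first exact: root.
split; first by move=> f [<-]; exists (inl a).
have zl : z <> l.2 by rewrite /z; case: eqP => [->|]; exact/nesym.
split=> //; split; first by case.
rewrite /z; case: eqP => _.
- by apply: IH1; apply: otd_path_over_rcons.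
- by apply: IH0; apply: otd_path_over_rcons.
Qed.

End LittlestoneToOtD.

Theorem mainTheorem8 (X : Type) (Y : finType) (F : (X -> Y) -> Prop) :
  DFFdim (OtD F) = Ldim F.
Proof.
apply: sup_height_ext => n /=; split.
- by case=> t [_ /ltree_of_dff_tree].
- case=> lt lt_sh; exists (dff_of_ltree lt [::] None None); split.
    by case: lt lt_sh.
  by apply: (dff_of_ltree_shattered lt_sh) => s [].
Qed.
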